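(* Let $\mathbf{A}=(A,\mathcal{R})$ and $\mathbf{B}=(B,\mathcal{S})$ be $\mathbf{K}$-objects and $f:\mathbf{A}\to\mathbf{B}$ a $\mathbf{K}$-morphism. Then the family $\Phi f$ with components $(\Phi f)_X:(\Phi\mathbf{B})X\to(\Phi\mathbf{A})X$, $(\Phi f)_X(g/\!\approx_{\mathbf{B}})=gf/\!\approx_{\mathbf{A}}$ for $g:B\to X$, is a well-defined natural transformation $\Phi\mathbf{B}\to\Phi\mathbf{A}$.
   Context: $\mathbf{T}$ is the category whose objects are pairs $(A,\mathcal{R})$ with $A$ a set and $\mathcal{R}$ a family of subsets of $A$, and whose morphisms $f:(A,\mathcal{R})\to(B,\mathcal{S})$ are maps $f:A\to B$ with $f^{-1}[S]\in\mathcal{R}$ for all $S\in\mathcal{S}$. Fix a simple graph with vertex set $V=\{v_1,\dots,v_6\}$ and edge set $\mathcal{G}$ (two-element subsets of $V$) with no non-identity automorphism. For a $\mathbf{T}$-object $(A,\mathcal{R})$ let $\Psi(A,\mathcal{R})=(\overline{A},\overline{\mathcal{R}})$ with $\overline{A}=A\sqcup V$ and $\overline{\mathcal{R}}$ consisting of $\{v_i\}$, $\overline{A}\setminus\{v_i\}$ ($i=1,\dots,6$), $G$, $\overline{A}\setminus G$ ($G\in\mathcal{G}$), and $\{v_1,v_2,v_3\}\cup R$, $\{v_4,v_5,v_6\}\cup(A\setminus R)$ ($R\in\mathcal{R}$); for a map $f$ let $\Psi f=f\sqcup\mathrm{id}_V$. $\mathbf{K}$ is the full subcategory of $\mathbf{T}$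 on the objects of the form $\Psi(A,\mathcal{R})$. For a $\mathbf{K}$-object $\mathbf{A}=(A,\mathcal{R})$ and a set $X$, let $\approx_{\mathbf{A}}$ be the relation on maps $A\to X$ given by $g_1\approx_{\mathbf{A}}g_2$ iff $g_1=g_2$, or $g_1[A]=g_2[A]$ is a two-element set $\{x,x'\}$ and $g_1^{-1}[\{x\}]=g_2^{-1}[\{x'\}]\in\mathcal{R}$ (this is an equivalence relation). The set functor $\Phi\mathbf{A}$ is given by $(\Phi\mathbf{A})X=\{g\,;\,g:A\to X\}/\!\approx_{\mathbf{A}}$ and $((\Phi\mathbf{A})h)(g/\!\approx_{\mathbf{A}})=hg/\!\approx_{\mathbf{A}}$ for $h:X\to Y$. *)

From mathcomp Require Import all_boot all_fingroup.
From Stdlib Require Import ClassicalEpsilon.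
Set Implicit Arguments. Unset Strict Implicit. Unset Printing Implicit Defensive.

(* Vertex set V = {v_1,...,v_6} is 'I_6 (v_{i+1} is the ordinal i).
   A subset of a set T is a predicate T -> Prop; a family of subsets is
   (T -> Prop) -> Prop.  A T-object is a pair (T, fam). *)

Definition V := 'I_6.

Definition is_Tmor (T U : Type) (R : (T -> Prop) -> Prop) (S : (U -> Prop) -> Prop)
  (f : T -> U) : Prop :=
  forall Ss, S Ss -> R (fun t => Ss (f t)).

(* The functor Psi on objects: carrier A + V, family PsiFam E R. *)
Definition PsiFam (E : {set {set V}}) (A : Type) (R : (A -> Prop) -> Prop)
  : ((A + V) -> Prop) -> Prop :=
  fun Ss =>
    (exists i : V, Ss = (fun z => z = inr i) \/ Ss = (fun z => z <> inr i))
 \/ (exists G : {set V}, G \in E /\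
       (Ss = (fun z => exists v, z = inr v /\ v \in G)
        \/ Ss = (fun z => ~ exists v, z = inr v /\ v \in G)))
 \/ (exists Rs : A -> Prop, R Rs /\
       (Ss = (fun z => match z with inl a => Rs a | inr v => (val v < 3)%N end)
        \/ Ss = (fun z => match z with inl a => ~ Rs a | inr v => (3 <= val v)%N end))).

Definition approx (T : Type) (R : (T -> Prop) -> Prop) (X : Type) (g1 g2 : T -> X) : Prop :=
  g1 = g2 \/
  exists x x' : X, x <> x' /\
    (forall y, (exists t, g1 t = y) <-> (y = x \/ y = x')) /\
    (forall y, (exists t, g2 t = y) <-> (y = x \/ y = x')) /\
    (fun t => g1 t = x) = (fun t => g2 t = x') /\
    R (fun t => g1 t = x).

(* (Phi A) X : the set of ~~_A-classes of maps T -> X (classes as predicates). *)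
Definition PhiObj (T : Type) (R : (T -> Prop) -> Prop) (X : Type) : Type :=
  { P : (T -> X) -> Prop | exists g : T -> X, P = approx R g }.

Definition cls (T : Type) (R : (T -> Prop) -> Prop) (X : Type) (g : T -> X)
  : PhiObj R X :=
  exist _ (approx R g) (ex_intro _ g erefl).

Definition rep (T : Type) (R : (T -> Prop) -> Prop) (X : Type) (c : PhiObj R X)
  : T -> X :=
  proj1_sig (constructive_indefinite_description _ (proj2_sig c)).

Definition PhiMap (T : Type) (R : (T -> Prop) -> Prop) (X Y : Type) (h : X -> Y)
  (c : PhiObj R X) : PhiObj R Y :=
  cls R (fun t => h (rep c t)).

(** A
    [T]-morphism [f] pulls [g⁻¹ x] back into the family of the source, and
    every member of a [Ψ]-family is a nonempty proper subset, so [g ∘ f] still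
    takes both values; hence [g ↦ g ∘ f] respects [≈]. *)
From Stdlib Require Import FunctionalExtensionality PropExtensionality.
From Stdlib Require Import ProofIrrelevance Classical ClassicalEpsilon.
From mathcomp Require Import all_boot all_fingroup.
Set Implicit Arguments. Unset Strict Implicit. Unset Printing Implicit Defensive.

Definition image2 (T X : Type) (g : T -> X) (x x' : X) : Prop :=
  forall y, (exists t, g t = y) <-> (y = x \/ y = x').

Definition proper_subset (T : Type) (Q : T -> Prop) : Prop :=
  (exists t, Q t) /\ (exists t, ~ Q t).

Definition proper_family (T : Type) (R : (T -> Prop) -> Prop) : Prop :=
  forall Q, R Q -> proper_subset Q.

Lemma image2_comp (T X Y : Type) (h : X -> Y) (g : T -> X) x x' :
  image2 g x x' -> image2 (fun t => h (g t)) (h x) (h x').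
Proof.
move=> Hg y; split.
- case=> t <-; have [->|->] : g t = x \/ g t = x' by apply/Hg; exists t.
  + by left.
  + by right.
- by case=> ->; [have [t <-] : exists t, g t = x by apply/Hg; left
                |have [t <-] : exists t, g t = x' by apply/Hg; right]; exists t.
Qed.

Section Approx.

Variables (T : Type) (R : (T -> Prop) -> Prop) (X : Type).

Lemma approx_swap (g1 g2 : T -> X) x x' :
  x <> x' -> image2 g1 x x' -> image2 g2 x x' ->
  (fun t => g1 t = x) = (fun t => g2 t = x') ->
  forall t, (g1 t = x /\ g2 t = x') \/ (g1 t = x' /\ g2 t = x).
Proof.
move=> neq_xx' img1 img2 pre1 t; have /= pre := f_equal (@^~ t) pre1.
have [g1x|g1x'] : g1 t = x \/ g1 t = x' by apply/img1; exists t.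
  by left; split; rewrite // -pre.
have [g2x|g2x'] : g2 t = x \/ g2 t = x' by apply/img2; exists t.
  by right.
have : g1 t = x by rewrite pre.
congruence.
Qed.

Lemma approx_refl (g : T -> X) : approx R g g.
Proof. by left. Qed.

Lemma approx_sym (g1 g2 : T -> X) : approx R g1 g2 -> approx R g2 g1.
Proof.
case=> [->|[x [x' [neq_xx' [img1 [img2 [pre Rpre]]]]]]]; first exact: approx_refl.
right; exists x', x; split; [by move/esym | split; [|split; [|split]]].
- by move=> z; rewrite img2; tauto.
- by move=> z; rewrite img1; tauto.
- exact: esym pre.
- by rewrite -pre.
Qed.

Lemma approx_trans (g1 g2 g3 : T -> X) :
  approx R g1 g2 -> approx R g2 g3 -> approx R g1 g3.
Proof.
case=> [->//|[x [x' [neq_xx' [img1 [img2 [pre Rpre]]]]]]].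
case=> [<-|[y [y' [neq_yy' [img2' [img3 [pre' Rpre']]]]]]].
  by right; exists x, x'.
have y_in : y = x \/ y = x' by apply/img2; apply/img2'; left.
have y'_in : y' = x \/ y' = x' by apply/img2; apply/img2'; right.
left; apply: functional_extensionality => t.
case: (approx_swap neq_xx' img1 img2 pre t) => -[? ?];
case: (approx_swap neq_yy' img2' img3 pre' t) => -[? ?];
by case: y_in => ?; case: y'_in => ?; congruence.
Qed.

Lemma approx_comp_left (Y : Type) (h : X -> Y) (g1 g2 : T -> X) :
  approx R g1 g2 -> approx R (fun t => h (g1 t)) (fun t => h (g2 t)).
Proof.
case=> [->|[x [x' [neq_xx' [img1 [img2 [pre Rpre]]]]]]]; first by left.
have swap := approx_swap neq_xx' img1 img2 pre.
have [hxx'|neq_hxx'] := classic (h x = h x').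
  by left; apply: functional_extensionality => t; case: (swap t) => -[-> ->].
have preimE (u : T -> X) z z' : (forall t, u t = z \/ u t = z') ->
    h z <> h z' -> (fun t => h (u t) = h z) = (fun t => u t = z).
  move=> uP neq_hzz'; apply: functional_extensionality => t.
  apply: propositional_extensionality; split=> [|->//].
  by case: (uP t) => -> // /esym /neq_hzz'.
have g1P t : g1 t = x \/ g1 t = x' by case: (swap t) => -[-> _]; [left|right].
have g2P t : g2 t = x' \/ g2 t = x by case: (swap t) => -[_ ->]; [left|right].
right; exists (h x), (h x'); split=> //.
split; [exact: image2_comp | split; [exact: image2_comp | split]].
- rewrite (preimE _ _ _ g1P neq_hxx') (preimE _ _ _ g2P) //.
  by move/esym.
- by rewrite (preimE _ _ _ g1P neq_hxx').
Qed.

Lemma approx_classE (g1 g2 : T -> X) : approx R g1 g2 -> approx R g1 = approx R g2.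
Proof.
move=> g12; apply: functional_extensionality => g.
apply: propositional_extensionality; split => [g1g|g2g].
- exact: approx_trans (approx_sym g12) g1g.
- exact: approx_trans g12 g2g.
Qed.

Lemma cls_eq (g1 g2 : T -> X) : approx R g1 g2 -> cls R g1 = cls R g2.
Proof. by move=> /approx_classE g12; apply: ProofIrrelevanceTheory.subset_eq_compat. Qed.

Lemma rep_cls (g : T -> X) : approx R (rep (cls R g)) g.
Proof.
rewrite /rep; case: constructive_indefinite_description => g' /= <-.
exact: approx_refl.
Qed.

End Approx.

Lemma approx_comp_Tmor (T U X : Type) (RT : (T -> Prop) -> Prop)
    (RU : (U -> Prop) -> Prop) (f : T -> U) (g1 g2 : U -> X) :
  proper_family RT -> is_Tmor RT RU f ->
  approx RU g1 g2 -> approx RT (fun a => g1 (f a)) (fun a => g2 (f a)).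
Proof.
move=> RTproper fTmor.
case=> [->|[x [x' [neq_xx' [img1 [img2 [pre Rpre]]]]]]]; first by left.
have swap := approx_swap neq_xx' img1 img2 pre.
have [[a1 g1a1] [a2 g1a2]] := RTproper _ (fTmor _ Rpre); simpl in g1a1, g1a2.
have [g1a2' g2a2] : g1 (f a2) = x' /\ g2 (f a2) = x.
  by case: (swap (f a2)) => -[// /g1a2].
have g2a1 : g2 (f a1) = x'.
  by case: (swap (f a1)) => -[//]; rewrite g1a1.
right; exists x, x'; split=> //.
split; [|split; [|split]].
- move=> y; split; first by case=> a <-; apply/img1; exists (f a).
  by case=> ->; [exists a1 | exists a2].
- move=> y; split; first by case=> a <-; apply/img2; exists (f a).
  by case=> ->; [exists a2 | exists a1].
- by have := f_equal (fun (P : U -> Prop) a => P (f a)) pre.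
- exact: fTmor _ Rpre.
Qed.

Definition Phi_mor (T U : Type) (RT : (T -> Prop) -> Prop) (RU : (U -> Prop) -> Prop)
    (f : T -> U) (X : Type) (c : PhiObj RU X) : PhiObj RT X :=
  cls RT (fun a => rep c (f a)).

Section PhiMorphism.

Variables (T U : Type) (RT : (T -> Prop) -> Prop) (RU : (U -> Prop) -> Prop).
Variable f : T -> U.
Hypotheses (RTproper : proper_family RT) (fTmor : is_Tmor RT RU f).

Lemma Phi_mor_cls (X : Type) (g : U -> X) :
  Phi_mor RT f (cls RU g) = cls RT (fun a => g (f a)).
Proof. exact/cls_eq/(approx_comp_Tmor RTproper fTmor)/rep_cls. Qed.

Lemma Phi_mor_natural (X Y : Type) (h : X -> Y) (c : PhiObj RU X) :
  Phi_mor RT f (PhiMap h c) = PhiMap h (Phi_mor RT f c).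
Proof.
rewrite /PhiMap Phi_mor_cls; apply/cls_eq/approx_comp_left.
exact/approx_sym/rep_cls.
Qed.

End PhiMorphism.

Lemma proper_subset_sep (T : Type) (Q : T -> Prop) t u :
  Q t -> ~ Q u -> proper_subset Q /\ proper_subset (fun z => ~ Q z).
Proof. by move=> Qt nQu; split; split; [exists t | exists u | exists u | exists t]. Qed.

Lemma PsiFam_proper (E : {set {set V}}) (HE : forall G : {set V}, G \in E -> #|G| = 2)
    (A : Type) (R : (A -> Prop) -> Prop) :
  proper_family (PsiFam E R).
Proof.
move=> Q [[i QE]|[[G [GE QE]]|[Rs [_ QE]]]].
- have /card_gt0P [j] : 0 < #|[set~ i]| by rewrite cardsC1 card_ord.
  rewrite in_setC1 => ji.
  have [] := @proper_subset_sep (A + V) (fun z => z = inr i) (inr i) (inr j) erefl.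
    by case=> eq_ji; rewrite eq_ji eqxx in ji.
  by case: QE => -> P1 P2.
- have /card_gt0P [v vG] : 0 < #|G| by rewrite HE.
  have /card_gt0P [w] : 0 < #|~: G|.
    by rewrite lt0n; apply/eqP => c0; move: (cardsC G); rewrite c0 HE // card_ord.
  rewrite in_setC => wG.
  have [] := @proper_subset_sep (A + V) (fun z => exists v, z = inr v /\ v \in G)
    (inr v) (inr w) (ex_intro _ v (conj erefl vG)).
    by case=> w' [[<-]]; rewrite (negbTE wG).
  by case: QE => -> P1 P2.
- case: QE => ->.
  + by split; [exists (inr ord0) | exists (inr ord_max)].
  + by split; [exists (inr ord_max) | exists (inr ord0)].
Qed.

Theorem lemma3p4
  (E : {set {set V}})
  (HE : forall G : {set V}, G \in E -> #|G| = 2)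
  (Hrigid : forall s : {perm V},
      (forall G : {set V}, (G \in E) = ((s @: G) \in E)) -> s = 1%g)
  (A : Type) (R : (A -> Prop) -> Prop)
  (B : Type) (S : (B -> Prop) -> Prop)
  (f : A + V -> B + V)
  (Hf : is_Tmor (PsiFam E R) (PsiFam E S) f) :
  exists eta : forall X : Type, PhiObj (PsiFam E S) X -> PhiObj (PsiFam E R) X,
    (forall (X : Type) (g : B + V -> X),
        eta X (cls (PsiFam E S) g) = cls (PsiFam E R) (fun a => g (f a))) /\
    (forall (X Y : Type) (h : X -> Y) (c : PhiObj (PsiFam E S) X),
        eta Y (PhiMap h c) = PhiMap h (eta X c)).
Proof.
have Rproper := PsiFam_proper HE (R := R).
exists (Phi_mor (PsiFam E R) f); split.
- exact: Phi_mor_cls.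
- exact: Phi_mor_natural.
Qed.
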